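(* Assume the weights are asymptotically vanishing and there is $n_0$ such that for every $n\ge n_0$ the subgame perfect Nash equilibrium $\mathbf g^*_n$ exists, is unique and has the form $u^i_t=\theta^n_tx^i_t+(\bar\theta^n_t-\theta^n_t)\bar x_t$ with $\theta^n_t,\bar\theta^n_t$ uniformly bounded in $n$ and converging to $\theta^\infty_t,\bar\theta^\infty_t$. Let $n\ge n_0$, let $(x^i_t,u^i_t)$ be the states and actions under $\mathbf g^*_n$ and $(\hat x^i_t,\hat u^i_t)$ those under the no-sharing profile $\hat{\mathbf g}_n$, driven by the same initial states and noises. Then for every player $i$ and every $t\in\mathbb N_T$: $x^i_t-\bar x_t=\hat x^i_t-\hat{\bar x}_t$ and $u^i_t-\bar u_t=\hat u^i_t-\hat{\bar u}_t$; in particular $e^i_t=\zeta^i_t$. Consequently, with $e_t=\hat{\bar x}_t-z^n_t$ and $\zeta_t=\bar x_t-z^n_t$, $\mathrm{vec}(e^i_{t+1},e_{t+1},\zeta_{t+1})=\tilde A^n_t\,\mathrm{vec}(e^i_t,e_t,\zeta_t)+\mathrm{vec}(\Delta w^i_t,\bar w_t,\bar w_t)$, where $\tilde A^n_t=\mathrm{diag}\big(A_t+B_t\theta^n_t,\;A_t+\bar A_t+(B_t+\bar B_t)\theta^n_t,\;A_t+\bar A_t+(B_t+\bar B_t)\bar\theta^n_t\big)$ and $\Delta w^i_t=w^i_t-\bar w_t$. Similarly, when in the $n$-player game $(x,u)$ are generated by $u^i_t=\theta^\infty_tx^i_t+(\bar\theta^\infty_t-\theta^\infty_t)\bar x_t$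 and $(\hat x,\hat u)$ by $\hat{\mathbf g}_\infty$, the same relation holds with $\tilde A^n_t$ replaced by $\tilde A^\infty_t$ (defined with $\theta^\infty_t,\bar\theta^\infty_t$) and $z^n_t$ replaced by $z^\infty_t$ in $e_t,\zeta_t$.
   Context: Fix $T\ge1$, $d_x,d_u\ge1$, $n\ge2$; $\mathbb N_k=\{1,\dots,k\}$. Player $i\in\mathbb N_n$ has state $x^i_t\in\mathbb R^{d_x}$, action $u^i_t\in\mathbb R^{d_u}$, noise $w^i_t\in\mathbb R^{d_x}$; $\mathbf x_t=(x^1_t,\dots,x^n_t)$. Real weights $\alpha^i_n$, $\sum_i\alpha^i_n=1$; asymptotically vanishing: there exist $n_0,\gamma_{\max}>0$ with $\alpha^i_n=\gamma^i/n$, $\gamma^i\in[-\gamma_{\max},\gamma_{\max}]$, for $n>n_0$. $\bar x_t=\sum_i\alpha^i_nx^i_t$, $\bar u_t=\sum_i\alpha^i_nu^i_t$, $\bar w_t=\sum_i\alpha^i_nw^i_t$, and analogously $\hat{\bar x}_t,\hat{\bar u}_t$. Dynamics $x^i_{t+1}=A_tx^i_t+B_tu^i_t+\bar A_t\bar x_t+\bar B_t\bar u_t+w^i_t$; zero-mean noises, $\mathbf x_1,\mathbf w_1,\dots,\mathbf w_T$ mutually independent with bounded covariances. Per-step cost $c^i_t=(x^i_t)^\top Q_tx^i_t+2(x^i_t)^\top S^x_t\bar x_t+\bar x_t^\top\bar Q_t\bar x_t+(u^i_t)^\top R_tu^i_t+2(u^i_t)^\top S^u_t\bar u_t+\bar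 u_t^\top\bar R_t\bar u_t+\sum_j\alpha^j_n((x^j_t)^\top G^x_tx^j_t+(u^j_t)^\top G^u_tu^j_t)$; subgame perfect Nash equilibrium: perfect-sharing profile from which no unilateral perfect-sharing deviation lowers any player's expected cost-to-go $\mathbb E[\sum_{t=t_0}^Tc^i_t]$ at any $t_0$. Predictions $z^n_1=z^\infty_1=\mathbb E[\bar x_1]$, $z^n_{t+1}=(A_t+\bar A_t+(B_t+\bar B_t)\bar\theta^n_t)z^n_t$, $z^\infty_{t+1}=(A_t+\bar A_t+(B_t+\bar B_t)\bar\theta^\infty_t)z^\infty_t$. Profiles: $\hat{\mathbf g}_n$: $\hat u^i_t=\theta^n_t\hat x^i_t+(\bar\theta^n_t-\theta^n_t)z^n_t$; $\hat{\mathbf g}_\infty$: $\hat u^i_t=\theta^\infty_t\hat x^i_t+(\bar\theta^\infty_t-\theta^\infty_t)z^\infty_t$; under both $\hat x^i_1=x^i_1$ and $\hat x^i_{t+1}=A_t\hat x^i_t+B_t\hat u^i_t+\bar A_t\hat{\bar x}_t+\bar B_t\hat{\bar u}_t+w^i_t$. Relative distances: $e^i_t=\hat x^i_t-\hat{\bar x}_t$, $\zeta^i_t=x^i_t-\bar x_t$. *)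

From HB Require Import structures.
From mathcomp Require Import all_boot all_order all_algebra.
From mathcomp Require Import all_classical all_reals all_analysis.
Set Implicit Arguments. Unset Strict Implicit. Unset Printing Implicit Defensive.
Import Order.TTheory GRing.Theory Num.Theory.
Local Open Scope ring_scope.

Section Defs.
Variable R : realType.
Variables dx du : nat.

Definition wavg n (a : 'I_n -> R) (d : nat) (v : 'I_n -> 'cV[R]_d) : 'cV[R]_d :=
  \sum_(i < n) a i *: v i.

Definition vec3 (d : nat) (a b c : 'cV[R]_d) : 'cV[R]_(d + (d + d)) :=
  col_mx a (col_mx b c).
Definition diag3 (d : nat) (A B C : 'M[R]_d) : 'M[R]_(d + (d + d)) :=
  block_mx A 0 0 (block_mx B 0 0 C).

Definition weights_sum_one (alpha : forall n : nat, 'I_n -> R) : Prop :=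
  forall n : nat, (2 <= n)%N -> \sum_(i < n) alpha n i = 1.

Definition asympt_vanishing (alpha : forall n : nat, 'I_n -> R) : Prop :=
  exists (n0 : nat) (gmax : R), 0 < gmax /\
    forall n : nat, (n0 < n)%N ->
      exists gamma : 'I_n -> R,
        (forall i, - gmax <= gamma i <= gmax) /\
        (forall i, alpha n i = gamma i / n%:R).

Variables (A Abar : nat -> 'M[R]_dx) (B Bbar : nat -> 'M[R]_(dx, du)).

Definition feedback_traj n (a : 'I_n -> R) (T : nat) (th thb : nat -> 'M[R]_(du, dx))
  (x1 : 'I_n -> 'cV[R]_dx) (w : nat -> 'I_n -> 'cV[R]_dx)
  (x : nat -> 'I_n -> 'cV[R]_dx) (u : nat -> 'I_n -> 'cV[R]_du) : Prop :=
  (forall i, x 1%N i = x1 i) /\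
  forall t : nat, (1 <= t <= T)%N -> forall i,
    u t i = th t *m x t i + (thb t - th t) *m wavg a (x t) /\
    x t.+1 i = A t *m x t i + B t *m u t i + Abar t *m wavg a (x t)
               + Bbar t *m wavg a (u t) + w t i.

(* Prediction z: z_1 = E[xbar_1] = sum_i a^i m^i (m^i = E[x^i_1]),
   z_{t+1} = (A_t + Abar_t + (B_t + Bbar_t) thb_t) z_t. *)
Definition prediction n (a : 'I_n -> R) (T : nat) (thb : nat -> 'M[R]_(du, dx))
  (m : 'I_n -> 'cV[R]_dx) (z : nat -> 'cV[R]_dx) : Prop :=
  z 1%N = wavg a m /\
  forall t : nat, (1 <= t <= T)%N ->
    z t.+1 = (A t + Abar t + (B t + Bbar t) *m thb t) *m z t.

Definition nosharing_traj n (a : 'I_n -> R) (T : nat) (th thb : nat -> 'M[R]_(du, dx))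
  (z : nat -> 'cV[R]_dx)
  (x1 : 'I_n -> 'cV[R]_dx) (w : nat -> 'I_n -> 'cV[R]_dx)
  (xh : nat -> 'I_n -> 'cV[R]_dx) (uh : nat -> 'I_n -> 'cV[R]_du) : Prop :=
  (forall i, xh 1%N i = x1 i) /\
  forall t : nat, (1 <= t <= T)%N -> forall i,
    uh t i = th t *m xh t i + (thb t - th t) *m z t /\
    xh t.+1 i = A t *m xh t i + B t *m uh t i + Abar t *m wavg a (xh t)
               + Bbar t *m wavg a (uh t) + w t i.

Definition relative_conclusion n (a : 'I_n -> R) (T : nat) (th thb : nat -> 'M[R]_(du, dx))
  (z : nat -> 'cV[R]_dx) (w : nat -> 'I_n -> 'cV[R]_dx)
  (x : nat -> 'I_n -> 'cV[R]_dx) (u : nat -> 'I_n -> 'cV[R]_du)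
  (xh : nat -> 'I_n -> 'cV[R]_dx) (uh : nat -> 'I_n -> 'cV[R]_du) : Prop :=
  forall t : nat, (1 <= t <= T)%N -> forall i : 'I_n,
    [/\ x t i - wavg a (x t) = xh t i - wavg a (xh t),
        u t i - wavg a (u t) = uh t i - wavg a (uh t) &
        vec3 (xh t.+1 i - wavg a (xh t.+1)) (wavg a (xh t.+1) - z t.+1)
             (wavg a (x t.+1) - z t.+1)
        = diag3 (A t + B t *m th t)
                (A t + Abar t + (B t + Bbar t) *m th t)
                (A t + Abar t + (B t + Bbar t) *m thb t)
            *m vec3 (xh t i - wavg a (xh t)) (wavg a (xh t) - z t) (wavg a (x t) - z t)
          + vec3 (w t i - wavg a (w t)) (wavg a (w t)) (wavg a (w t))].

End Defs.

From HB Require Import structures.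
From mathcomp Require Import all_boot all_order all_algebra.
From mathcomp Require Import all_classical all_reals all_analysis.
Import Order.TTheory GRing.Theory Num.Theory.
Import numFieldNormedType.Exports.
Set Implicit Arguments. Unset Strict Implicit. Unset Printing Implicit Defensive.
Local Open Scope classical_set_scope.
Local Open Scope ring_scope.

(* Under both profiles player i applies the gain [th t] to its own state plus
   a term common to all players: [thb t - th t] times the empirical mean, resp.
   times the prediction [z t]. As the weights sum to one, common terms cancel
   in the deviation [x i - wavg a x] from the mean, which therefore follows the
   same recursion [e' = (A + B th) e + (w i - wavg a w)] under both profiles
   and, starting from the same initial states, coincides. The means follow
   closed linear recursions, from which the prediction recursion is
   subtracted. *)

Lemma subrDD (V : zmodType) (a b c d : V) : (a + b) - (c + d) = (a - c) + (b - d).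
Proof. by rewrite opprD addrACA. Qed.

Lemma mulmx_sub_pred (R : pzRingType) d k (P : 'M[R]_d) (Q : 'M[R]_(d, k))
    (K : 'M[R]_(k, d)) (xb z w : 'cV[R]_d) (ub : 'cV[R]_k) :
  P *m xb + Q *m ub + w - (P + Q *m K) *m z
  = P *m (xb - z) + Q *m (ub - K *m z) + w.
Proof.
by rewrite mulmxDl -mulmxA addrAC subrDD -!mulmxBr.
Qed.

Lemma diag3_mul_vec3 (R : realType) d (P Q S : 'M[R]_d) (a b c : 'cV[R]_d) :
  diag3 P Q S *m vec3 a b c = vec3 (P *m a) (Q *m b) (S *m c).
Proof. by rewrite /diag3 /vec3 !mul_block_col !mul0mx !addr0 !add0r. Qed.

Lemma add_vec3 (R : realType) d (a b c a' b' c' : 'cV[R]_d) :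
  vec3 a b c + vec3 a' b' c' = vec3 (a + a') (b + b') (c + c').
Proof. by rewrite /vec3 !add_col_mx. Qed.

Section WeightedMean.
Variables (R : realType) (n : nat) (a : 'I_n -> R).

Lemma wavgD d (v v' : 'I_n -> 'cV[R]_d) :
  wavg a (fun i => v i + v' i) = wavg a v + wavg a v'.
Proof. by rewrite /wavg -big_split; apply: eq_bigr => i _; rewrite scalerDr. Qed.

Lemma wavg_mulmx d k (M : 'M[R]_(d, k)) (v : 'I_n -> 'cV[R]_k) :
  wavg a (fun i => M *m v i) = M *m wavg a v.
Proof. by rewrite /wavg mulmx_sumr; apply: eq_bigr => i _; rewrite scalemxAr. Qed.

Hypothesis sum_a : \sum_(i < n) a i = 1.

Lemma wavg_cst d (c : 'cV[R]_d) : wavg a (fun=> c) = c.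
Proof. by rewrite /wavg -scaler_suml sum_a scale1r. Qed.

Lemma wavg_affine d k (M : 'M[R]_(d, k)) (v : 'I_n -> 'cV[R]_k) c :
  wavg a (fun i => M *m v i + c) = M *m wavg a v + c.
Proof. by rewrite wavgD wavg_mulmx wavg_cst. Qed.

Lemma dev_affine d k (M : 'M[R]_(d, k)) (v : 'I_n -> 'cV[R]_k) c i :
  M *m v i + c - wavg a (fun j => M *m v j + c) = M *m (v i - wavg a v).
Proof. by rewrite wavg_affine subrDD subrr addr0 mulmxBr. Qed.

Section MeanFieldStep.
Variables (dx du : nat) (A Abar : 'M[R]_dx) (B Bbar : 'M[R]_(dx, du)).

Definition mf_step (x : 'I_n -> 'cV[R]_dx) (u : 'I_n -> 'cV[R]_du)
    (w : 'I_n -> 'cV[R]_dx) (i : 'I_n) : 'cV[R]_dx :=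
  A *m x i + B *m u i + Abar *m wavg a x + Bbar *m wavg a u + w i.

Lemma wavg_mf_step x u w :
  wavg a (mf_step x u w)
  = (A + Abar) *m wavg a x + (B + Bbar) *m wavg a u + wavg a w.
Proof.
rewrite /mf_step !wavgD !wavg_mulmx !wavg_cst !mulmxDl.
by congr (_ + _); rewrite -addrA addrACA.
Qed.

Lemma dev_mf_step x u w i :
  mf_step x u w i - wavg a (mf_step x u w)
  = A *m (x i - wavg a x) + B *m (u i - wavg a u) + (w i - wavg a w).
Proof.
rewrite /mf_step !wavgD !wavg_mulmx !wavg_cst.
by rewrite !subrDD !subrr !addr0 -!mulmxBr.
Qed.

End MeanFieldStep.

Section Trajectories.
Variables (T dx du : nat) (A Abar : nat -> 'M[R]_dx) (B Bbar : nat -> 'M[R]_(dx, du)).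
Variables (th thb : nat -> 'M[R]_(du, dx)) (z : nat -> 'cV[R]_dx) (m x1 : 'I_n -> 'cV[R]_dx).
Variables (w x xh : nat -> 'I_n -> 'cV[R]_dx) (u uh : nat -> 'I_n -> 'cV[R]_du).
Hypothesis traj_x : feedback_traj A Abar B Bbar a T th thb x1 w x u.
Hypothesis pred_z : prediction A Abar B Bbar a T thb m z.
Hypothesis traj_xh : nosharing_traj A Abar B Bbar a T th thb z x1 w xh uh.

Let step t := mf_step (A t) (Abar t) (B t) (Bbar t).

Lemma feedback_step t : (1 <= t <= T)%N ->
  u t = (fun i => th t *m x t i + (thb t - th t) *m wavg a (x t))
  /\ x t.+1 = step t (x t) (u t) (w t).
Proof. by case: traj_x => _ H Ht; split; apply/funext => i; case: (H t Ht i). Qed.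

Lemma nosharing_step t : (1 <= t <= T)%N ->
  uh t = (fun i => th t *m xh t i + (thb t - th t) *m z t)
  /\ xh t.+1 = step t (xh t) (uh t) (w t).
Proof. by case: traj_xh => _ H Ht; split; apply/funext => i; case: (H t Ht i). Qed.

Lemma wavg_feedback_control t : (1 <= t <= T)%N ->
  wavg a (u t) = thb t *m wavg a (x t).
Proof.
by move=> Ht; rewrite (feedback_step Ht).1 wavg_affine -mulmxDl addrC subrK.
Qed.

Lemma wavg_nosharing_control t : (1 <= t <= T)%N ->
  wavg a (uh t) = th t *m wavg a (xh t) + (thb t - th t) *m z t.
Proof. by move=> Ht; rewrite (nosharing_step Ht).1 wavg_affine. Qed.

Lemma wavg_nosharing_control_sub_pred t : (1 <= t <= T)%N ->
  wavg a (uh t) - thb t *m z t = th t *m (wavg a (xh t) - z t).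
Proof.
move=> Ht; rewrite wavg_nosharing_control // mulmxBl addrCA.
by rewrite [thb t *m z t + _]addrC addrK mulmxBr.
Qed.

Lemma dev_feedback_control t i : (1 <= t <= T)%N ->
  u t i - wavg a (u t) = th t *m (x t i - wavg a (x t)).
Proof. by move=> Ht; rewrite (feedback_step Ht).1 dev_affine. Qed.

Lemma dev_nosharing_control t i : (1 <= t <= T)%N ->
  uh t i - wavg a (uh t) = th t *m (xh t i - wavg a (xh t)).
Proof. by move=> Ht; rewrite (nosharing_step Ht).1 dev_affine. Qed.

Lemma dev_feedback_nosharing t i : (1 <= t <= T.+1)%N ->
  x t i - wavg a (x t) = xh t i - wavg a (xh t).
Proof.
elim: t i => // -[_ | t IH] i Ht.
  have -> : x 1%N = x1 by apply/funext; case: traj_x.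
  by have -> : xh 1%N = x1 by apply/funext; case: traj_xh.
have Ht' : (1 <= t.+1 <= T)%N by [].
rewrite (feedback_step Ht').2 (nosharing_step Ht').2 !dev_mf_step.
by rewrite dev_feedback_control // dev_nosharing_control // (IH i (ltnW Ht)).
Qed.

Lemma dev_nosharing_next t i : (1 <= t <= T)%N ->
  xh t.+1 i - wavg a (xh t.+1)
  = (A t + B t *m th t) *m (xh t i - wavg a (xh t)) + (w t i - wavg a (w t)).
Proof.
move=> Ht; rewrite (nosharing_step Ht).2 dev_mf_step dev_nosharing_control //.
by rewrite mulmxA -mulmxDl.
Qed.

Lemma mean_nosharing_next t : (1 <= t <= T)%N ->
  wavg a (xh t.+1) - z t.+1
  = (A t + Abar t + (B t + Bbar t) *m th t) *m (wavg a (xh t) - z t) + wavg a (w t).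
Proof.
move=> Ht; rewrite (nosharing_step Ht).2 wavg_mf_step (pred_z.2 t Ht).
by rewrite mulmx_sub_pred wavg_nosharing_control_sub_pred // mulmxA -mulmxDl.
Qed.

Lemma mean_feedback_next t : (1 <= t <= T)%N ->
  wavg a (x t.+1) - z t.+1
  = (A t + Abar t + (B t + Bbar t) *m thb t) *m (wavg a (x t) - z t) + wavg a (w t).
Proof.
move=> Ht; rewrite (feedback_step Ht).2 wavg_mf_step (pred_z.2 t Ht).
by rewrite mulmx_sub_pred wavg_feedback_control // -mulmxBr mulmxA -mulmxDl.
Qed.

Lemma feedback_nosharing_relative :
  relative_conclusion A Abar B Bbar a T th thb z w x u xh uh.
Proof.
move=> t Ht i; have Ht1 : (1 <= t <= T.+1)%N by case/andP: Ht => -> /leqW.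
split; first exact: dev_feedback_nosharing.
  by rewrite dev_feedback_control // dev_nosharing_control // dev_feedback_nosharing.
rewrite diag3_mul_vec3 add_vec3.
by rewrite dev_nosharing_next // mean_nosharing_next // mean_feedback_next.
Qed.

End Trajectories.
End WeightedMean.

Theorem lemma3 (R : realType) (T dx du : nat)
  (A Abar : nat -> 'M[R]_dx) (B Bbar : nat -> 'M[R]_(dx, du))
  (alpha : forall n : nat, 'I_n -> R)
  (th thb : nat -> nat -> 'M[R]_(du, dx)) (thi thbi : nat -> 'M[R]_(du, dx))
  (n0 : nat)
  (Hsum : weights_sum_one alpha)
  (Hvan : asympt_vanishing alpha)
  (Hbnd : exists K : R, forall n t (p : 'I_du) (q : 'I_dx),
            (n0 <= n)%N -> (1 <= t <= T)%N ->
            `|th n t p q| <= K /\ `|thb n t p q| <= K)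
  (Hcvg : forall t, (1 <= t <= T)%N -> forall (p : 'I_du) (q : 'I_dx),
            ((fun n : nat => th n t p q) @ \oo --> (thi t p q : R)) /\
            ((fun n : nat => thb n t p q) @ \oo --> (thbi t p q : R)))
  (n : nat) (Hn0 : (n0 <= n)%N) (Hn2 : (2 <= n)%N)
  (x1 m : 'I_n -> 'cV[R]_dx) (w : nat -> 'I_n -> 'cV[R]_dx)
  (* part 1: g*_n versus the no-sharing profile hat g_n *)
  (x : nat -> 'I_n -> 'cV[R]_dx) (u : nat -> 'I_n -> 'cV[R]_du)
  (xh : nat -> 'I_n -> 'cV[R]_dx) (uh : nat -> 'I_n -> 'cV[R]_du)
  (z : nat -> 'cV[R]_dx)
  (Hx : feedback_traj A Abar B Bbar (alpha n) T (th n) (thb n) x1 w x u)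
  (Hz : prediction A Abar B Bbar (alpha n) T (thb n) m z)
  (Hxh : nosharing_traj A Abar B Bbar (alpha n) T (th n) (thb n) z x1 w xh uh)
  (* part 2: infinite-population gains versus hat g_infty, in the n-player game *)
  (x' : nat -> 'I_n -> 'cV[R]_dx) (u' : nat -> 'I_n -> 'cV[R]_du)
  (xh' : nat -> 'I_n -> 'cV[R]_dx) (uh' : nat -> 'I_n -> 'cV[R]_du)
  (zi : nat -> 'cV[R]_dx)
  (Hx' : feedback_traj A Abar B Bbar (alpha n) T thi thbi x1 w x' u')
  (Hzi : prediction A Abar B Bbar (alpha n) T thbi m zi)
  (Hxh' : nosharing_traj A Abar B Bbar (alpha n) T thi thbi zi x1 w xh' uh') :
  relative_conclusion A Abar B Bbar (alpha n) T (th n) (thb n) z w x u xh uh /\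
  relative_conclusion A Abar B Bbar (alpha n) T thi thbi zi w x' u' xh' uh'.
Proof.
have sum_a := Hsum n Hn2.
split; [exact: (feedback_nosharing_relative sum_a Hx Hz Hxh)
       | exact: (feedback_nosharing_relative sum_a Hx' Hzi Hxh')].
Qed.
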